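(* Let $\{\mathbf{W}(t)\}_{t \geq 0}$ be i.i.d. random $n \times n$ row-stochastic matrices with mean $\overline{\mathbf{W}} = \mathbb{E}\{\mathbf{W}(t)\}$, each of the block form $$\mathbf{W}(t) = \begin{pmatrix} \mathbf{I}_{n_s} & \mathbf{0} \\ \mathbf{B}(t) & \mathbf{D}(t) \end{pmatrix},$$ with $1 \le n_s < n$, and correspondingly $\overline{\mathbf{W}} = \begin{pmatrix} \mathbf{I}_{n_s} & \mathbf{0} \\ \overline{\mathbf{B}} & \overline{\mathbf{D}} \end{pmatrix}$. Assume $\|\overline{\mathbf{D}}\|_2 < 1$ and $\mathbb{E}\{\|\mathbf{D}(t)\|_2\} = \|\overline{\mathbf{D}}\|_2$. For $t \geq s$ let $\boldsymbol{\Phi}(s,t) = \mathbf{W}(t)\mathbf{W}(t-1)\cdots\mathbf{W}(s)$. Then $\mathbf{D}(t)\mathbf{D}(t-1)\cdots\mathbf{D}(s) \to \mathbf{0}$ almost surely as $t - s \to \infty$, so that $\boldsymbol{\Phi}(s,t)$ converges almost surely to $$\begin{pmatrix} \mathbf{I} & \mathbf{0} \\ \mathbf{B}(s,t) & \mathbf{0} \end{pmatrix} \quad\text{as } |t-s|\to\infty$$ (in the sense that the difference tends to zero), where $\mathbf{B}(s,t) = \sum_{q=s}^{t} \big(\mathbf{D}(t)\cdots\mathbf{D}(q+1)\big)\mathbf{B}(q)$ (the empty product for $q=t$ being the identity) is bounded almost surely.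
   Context: This models opinion dynamics $\mathbf{x}(t+1) = \mathbf{W}(t)\mathbf{x}(t)$ in which the first $n_s$ agents are stubborn (never change opinion). $\|\cdot\|_2$ is the spectral norm. *)

From HB Require Import structures.
From mathcomp Require Import all_boot all_order all_algebra.
From mathcomp Require Import all_classical all_reals all_analysis.
Set Implicit Arguments. Unset Strict Implicit. Unset Printing Implicit Defensive.
Import Order.TTheory GRing.Theory Num.Theory.
Local Open Scope classical_set_scope.
Local Open Scope ring_scope.

Definition vnorm2 {R : realType} {q : nat} (x : 'cV[R]_q) : R :=
  Num.sqrt (\sum_(i < q) (x i 0) ^+ 2).

Definition specnorm {R : realType} {p q : nat} (A : 'M[R]_(p, q)) : R :=
  sup [set vnorm2 (A *m x) | x in [set x : 'cV[R]_q | vnorm2 x <= 1]].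

Fixpoint lprod {R : ringType} {m : nat} (F : nat -> 'M[R]_m) (s k : nat) : 'M[R]_m :=
  match k with
  | 0 => F s
  | k'.+1 => F (s + k'.+1)%N *m lprod F s k'
  end.

Definition prod_between {R : ringType} {m : nat} (F : nat -> 'M[R]_m) (a b : nat)
  : 'M[R]_m := if (b < a)%N then 1%:M else lprod F a (b - a).

Definition mx_event {T : Type} {R : realType} {p q : nat}
  (X : T -> 'M[R]_(p, q)) (A : 'I_p -> 'I_q -> set R) : set T :=
  [set w | forall i j, A i j (X w i j)].

(* The random matrices W t (t : nat) are i.i.d.: entries are measurable
   (Borel) random variables; the family is mutually independent (product rule
   over every finite set of distinct times, for the generating pi-system of
   "rectangle" events of each matrix); and all W t have the law of W 0. *)
Definition iid_mx {d} {T : measurableType d} {R : realType} {p q : nat}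
  (P : probability T R) (W : nat -> T -> 'M[R]_(p, q)) : Prop :=
  [/\ (forall t i j, measurable_fun setT (fun w => W t w i j)),
      (forall (S : seq nat) (A : nat -> 'I_p -> 'I_q -> set R),
          uniq S -> (forall t i j, measurable (A t i j)) ->
          P [set w | forall t, t \in S -> mx_event (W t) (A t) w]
          = \big[*%E/1%E]_(t <- S) P (mx_event (W t) (A t)))
    & (forall t (A : 'I_p -> 'I_q -> set R), (forall i j, measurable (A i j)) ->
          P (mx_event (W t) A) = P (mx_event (W 0%N) A))].

Definition row_stochastic {R : realType} {n : nat} (M : 'M[R]_n) : Prop :=
  (forall i j, 0 <= M i j) /\ (forall i, \sum_j M i j = 1).

(* Independence of the [W t] is only available for events constraining entries
   to Borel sets, so [||D t||] is replaced by a simple upper bound: quantize each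
   entry of [D t] into one of [K+1] cells of width [1/(K+1)], let [L] be the
   matrix of left cell endpoints, [delta = m^2/(K+1)] and [U t = ||L|| + delta].
   Then [||D t|| <= U t] and [U t - 2 delta <= max 0 (||L|| - delta) <= ||D t||];
   the middle term is simple, so [E (U t) <= ||Dbar|| + 2 delta =: rho < 1] for
   [K] large, although [||D t||] need not be measurable. Independence over
   cell events gives [E (U s * ... * U (s+k)) <= rho^(k+1)]; hence the series of
   these products is integrable, finite almost surely, and its terms, which
   dominate [||D (s+k) ... D s||], tend to 0. Finally [Phi s t] minus the limit
   matrix is [block_mx 0 0 0 (D t ... D s)], while [B s t] is the lower-left
   block of the row-stochastic [Phi s t], so its entries lie in [0, 1]. *)

From HB Require Import structures.
From mathcomp Require Import all_boot all_order all_algebra.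
From mathcomp Require Import all_classical all_reals all_analysis.
From mathcomp Require Import lra ring zify.
Import Order.TTheory GRing.Theory Num.Theory.
Import numFieldNormedType.Exports.
Local Open Scope classical_set_scope.
Local Open Scope ring_scope.
Set Implicit Arguments. Unset Strict Implicit.

Section SpectralNorm.
Variable R : realType.
Implicit Types p q r : nat.

Lemma sum_sqr_ge0 q (x : 'cV[R]_q) : 0 <= \sum_(i < q) x i 0 ^+ 2.
Proof. by apply: sumr_ge0 => i _; exact: sqr_ge0. Qed.

Lemma vnorm2_ge0 q (x : 'cV[R]_q) : 0 <= vnorm2 x.
Proof. exact: sqrtr_ge0. Qed.

Lemma vnorm2_sqr q (x : 'cV[R]_q) : vnorm2 x ^+ 2 = \sum_(i < q) x i 0 ^+ 2.
Proof. by rewrite /vnorm2 sqr_sqrtr // sum_sqr_ge0. Qed.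

Lemma vnorm2_0 q : vnorm2 (0 : 'cV[R]_q) = 0.
Proof. by rewrite /vnorm2 big1 ?sqrtr0 // => i _; rewrite mxE expr0n. Qed.

Lemma normr_entry_le_vnorm2 q (x : 'cV[R]_q) i : `|x i 0| <= vnorm2 x.
Proof.
rewrite -sqrtr_sqr /vnorm2 ler_sqrt ?sum_sqr_ge0 // (bigD1 i) //=.
by rewrite lerDl; apply: sumr_ge0 => j _; exact: sqr_ge0.
Qed.

Lemma vnorm2_eq0 q (x : 'cV[R]_q) : vnorm2 x = 0 -> x = 0.
Proof.
move=> x0; apply/matrixP => i j; rewrite (ord1 j) mxE.
by apply/eqP; rewrite -normr_le0 -x0 normr_entry_le_vnorm2.
Qed.

Lemma vnorm2_le_sum_norm q (x : 'cV[R]_q) : vnorm2 x <= \sum_i `|x i 0|.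
Proof.
have s0 : 0 <= \sum_i `|x i 0| by apply: sumr_ge0 => i _.
rewrite -(ger0_norm s0) -sqrtr_sqr /vnorm2 ler_sqrt ?sqr_ge0 //.
rewrite expr2 mulr_suml; apply: ler_sum => i _.
rewrite mulr_sumr (bigD1 i) //= -expr2 real_normK ?num_real //.
by rewrite lerDl; apply: sumr_ge0 => j _; exact: mulr_ge0.
Qed.

Lemma vnorm2Z q (a : R) (x : 'cV[R]_q) : vnorm2 (a *: x) = `|a| * vnorm2 x.
Proof.
rewrite /vnorm2 -sqrtr_sqr -sqrtrM ?sqr_ge0 // mulr_sumr.
by congr Num.sqrt; apply: eq_bigr => i _; rewrite !mxE exprMn.
Qed.

Lemma cauchy_schwarz q (x y : 'cV[R]_q) :
  \sum_i x i 0 * y i 0 <= vnorm2 x * vnorm2 y.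
Proof.
set a := \sum_i x i 0 ^+ 2; set b := \sum_i y i 0 ^+ 2.
set c := \sum_i x i 0 * y i 0.
have a0 : 0 <= a by exact: sum_sqr_ge0.
have b0 : 0 <= b by exact: sum_sqr_ge0.
have quadratic_ge0 t : 0 <= a - 2 * t * c + t ^+ 2 * b.
  have -> : a - 2 * t * c + t ^+ 2 * b = \sum_i (x i 0 - t * y i 0) ^+ 2.
    rewrite /a /b /c !mulr_sumr -sumrB -big_split /=.
    by apply: eq_bigr => i _; ring.
  by apply: sumr_ge0 => i _; exact: sqr_ge0.
have c2_le_ab : c ^+ 2 <= a * b.
  have [b_eq0|b_neq0] := eqVneq b 0.
    have y0 i : y i 0 = 0.
      apply/eqP; rewrite -sqrf_eq0; apply/eqP.
      by apply: (psumr_eq0P _ b_eq0) => // j _; exact: sqr_ge0.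
    have -> : c = 0 by rewrite /c big1 // => i _; rewrite y0 mulr0.
    by rewrite b_eq0 mulr0 expr2 mulr0.
  have b_gt0 : 0 < b by rewrite lt_def b_neq0 b0.
  have := quadratic_ge0 (c / b).
  have -> : a - 2 * (c / b) * c + (c / b) ^+ 2 * b = (a * b - c ^+ 2) / b.
    by field.
  by rewrite pmulr_lge0 ?invr_gt0 // subr_ge0.
apply: le_trans (ler_norm c) _.
by rewrite /vnorm2 -sqrtrM // -sqrtr_sqr ler_sqrt ?mulr_ge0.
Qed.

Lemma vnorm2D_le q (x y : 'cV[R]_q) : vnorm2 (x + y) <= vnorm2 x + vnorm2 y.
Proof.
have s0 : 0 <= vnorm2 x + vnorm2 y by rewrite addr_ge0 ?vnorm2_ge0.
rewrite -(ger0_norm s0) -sqrtr_sqr {1}/vnorm2 ler_sqrt ?sqr_ge0 //.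
rewrite sqrrD !vnorm2_sqr.
have -> : \sum_(i < q) (x + y) i 0 ^+ 2 = \sum_(i < q) x i 0 ^+ 2
    + 2 * \sum_(i < q) x i 0 * y i 0 + \sum_(i < q) y i 0 ^+ 2.
  by rewrite mulr_sumr -!big_split /=; apply: eq_bigr => i _; rewrite !mxE; ring.
by rewrite mulr2n; have := cauchy_schwarz x y; lra.
Qed.

Definition mxnorm1 p q (A : 'M[R]_(p, q)) : R := \sum_i \sum_j `|A i j|.

Lemma mxnorm1_distC p q (A B : 'M[R]_(p, q)) : mxnorm1 (A - B) = mxnorm1 (B - A).
Proof.
by apply: eq_bigr => i _; apply: eq_bigr => j _; rewrite !mxE distrC.
Qed.

Lemma vnorm2_mulmx_le_mxnorm1 p q (A : 'M[R]_(p, q)) x :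
  vnorm2 x <= 1 -> vnorm2 (A *m x) <= mxnorm1 A.
Proof.
move=> x1; apply: le_trans (vnorm2_le_sum_norm _) _; apply: ler_sum => i _.
rewrite mxE; apply: le_trans (ler_norm_sum _ _ _) _; apply: ler_sum => j _.
by rewrite normrM ler_piMr // (le_trans (normr_entry_le_vnorm2 _ _)).
Qed.

Lemma specnorm_has_sup p q (A : 'M[R]_(p, q)) :
  has_sup [set vnorm2 (A *m x) | x in [set x : 'cV[R]_q | vnorm2 x <= 1]].
Proof.
split; first by exists (vnorm2 (A *m 0)), 0 => //=; rewrite vnorm2_0 ler01.
by exists (mxnorm1 A) => _ [x x1 <-]; exact: vnorm2_mulmx_le_mxnorm1.
Qed.

Lemma specnorm_ub p q (A : 'M[R]_(p, q)) x :
  vnorm2 x <= 1 -> vnorm2 (A *m x) <= specnorm A.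
Proof. by move=> x1; apply: (sup_upper_bound (specnorm_has_sup A)); exists x. Qed.

Lemma specnorm_le p q (A : 'M[R]_(p, q)) c :
  (forall x, vnorm2 x <= 1 -> vnorm2 (A *m x) <= c) -> specnorm A <= c.
Proof.
move=> Ac; apply: ge_sup; first by case: (specnorm_has_sup A).
by move=> _ [x x1 <-]; exact: Ac.
Qed.

Lemma specnorm_ge0 p q (A : 'M[R]_(p, q)) : 0 <= specnorm A.
Proof.
apply: le_trans (vnorm2_ge0 (A *m 0)) (specnorm_ub _ _).
by rewrite vnorm2_0 ler01.
Qed.

Lemma specnorm_le_mxnorm1 p q (A : 'M[R]_(p, q)) : specnorm A <= mxnorm1 A.
Proof. by apply: specnorm_le => x; exact: vnorm2_mulmx_le_mxnorm1. Qed.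

Lemma vnorm2_mulmx_le p q (A : 'M[R]_(p, q)) x :
  vnorm2 (A *m x) <= specnorm A * vnorm2 x.
Proof.
have [x0|x_neq0] := eqVneq (vnorm2 x) 0.
  by rewrite (vnorm2_eq0 x0) mulmx0 vnorm2_0 vnorm2_0 mulr0.
have x_gt0 : 0 < vnorm2 x by rewrite lt_def x_neq0 vnorm2_ge0.
have := @specnorm_ub _ _ A ((vnorm2 x)^-1 *: x).
rewrite -scalemxAr !vnorm2Z ger0_norm ?invr_ge0 ?vnorm2_ge0 // mulVf // lexx.
by rewrite ler_pdivrMl // mulrC; apply.
Qed.

Lemma specnormM_le p q r (A : 'M[R]_(p, q)) (B : 'M[R]_(q, r)) :
  specnorm (A *m B) <= specnorm A * specnorm B.
Proof.
apply: specnorm_le => x x1; rewrite -mulmxA.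
apply: le_trans (vnorm2_mulmx_le _ _) _; rewrite ler_wpM2l ?specnorm_ge0 //.
apply: le_trans (vnorm2_mulmx_le _ _) _.
by rewrite -[leRHS]mulr1 ler_wpM2l ?specnorm_ge0.
Qed.

Lemma specnormD_le p q (A B : 'M[R]_(p, q)) :
  specnorm (A + B) <= specnorm A + specnorm B.
Proof.
apply: specnorm_le => x x1; rewrite mulmxDl.
by apply: le_trans (vnorm2D_le _ _) _; apply: lerD; exact: specnorm_ub.
Qed.

Lemma specnorm_le_add_mxnorm1 p q (A B : 'M[R]_(p, q)) :
  specnorm A <= specnorm B + mxnorm1 (A - B).
Proof.
rewrite -[X in specnorm X <= _](subrK B) addrC.
by apply: le_trans (specnormD_le _ _) _; rewrite lerD2l specnorm_le_mxnorm1.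
Qed.

Lemma normr_entry_le_specnorm p q (A : 'M[R]_(p, q)) i j : `|A i j| <= specnorm A.
Proof.
pose e : 'cV[R]_q := \col_k (k == j)%:R.
have e1 : vnorm2 e = 1.
  rewrite /vnorm2 (bigD1 j) //= big1 ?addr0 ?mxE ?eqxx ?expr1n ?sqrtr1 //.
  by move=> k /negbTE kj; rewrite mxE kj expr0n.
have Ae : (A *m e) i 0 = A i j.
  rewrite mxE (bigD1 j) //= big1 ?addr0 ?mxE ?eqxx ?mulr1 //.
  by move=> k /negbTE kj; rewrite mxE kj mulr0.
rewrite -Ae; apply: le_trans (normr_entry_le_vnorm2 _ i) (specnorm_ub _ _).
by rewrite e1.
Qed.

Lemma mxnorm1_le_specnorm p q (A : 'M[R]_(p, q)) :
  mxnorm1 A <= (p * q)%:R * specnorm A.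
Proof.
apply: (@le_trans _ _ (\sum_(i < p) \sum_(j < q) specnorm A)).
  by apply: ler_sum => i _; apply: ler_sum => j _; exact: normr_entry_le_specnorm.
by rewrite !sumr_const !card_ord -mulrnA mulr_natl mulnC.
Qed.

Lemma specnorm_lprod_le n (F : nat -> 'M[R]_n) s k :
  specnorm (lprod F s k) <= \prod_(j < k.+1) specnorm (F (s + j)%N).
Proof.
elim: k => [|k IHk]; first by rewrite big_ord1 addn0.
rewrite big_ord_recr /= mulrC.
apply: le_trans (specnormM_le _ _) _.
by rewrite ler_wpM2l ?specnorm_ge0.
Qed.

End SpectralNorm.

Section RowStochastic.
Variable R : realType.

Lemma row_stochasticM n (A B : 'M[R]_n) :
  row_stochastic A -> row_stochastic B -> row_stochastic (A *m B).
Proof.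
move=> [A0 A1] [B0 B1]; split.
  by move=> i j; rewrite mxE; apply: sumr_ge0 => k _; exact: mulr_ge0.
move=> i; under eq_bigr do rewrite mxE.
rewrite exchange_big /= -(A1 i); apply: eq_bigr => k _.
by rewrite -mulr_sumr B1 mulr1.
Qed.

Lemma row_stochastic_lprod n (F : nat -> 'M[R]_n) s k :
  (forall t, row_stochastic (F t)) -> row_stochastic (lprod F s k).
Proof. by move=> F_rs; elim: k => [|k IHk] //=; exact: row_stochasticM. Qed.

Lemma row_stochastic_entry n (A : 'M[R]_n) i j :
  row_stochastic A -> 0 <= A i j <= 1.
Proof.
move=> [A0 A1]; rewrite A0 /= -(A1 i) (bigD1 j) //= lerDl.
by apply: sumr_ge0 => k _.
Qed.

End RowStochastic.

Lemma prod_betweenS (R : nzRingType) n (G : nat -> 'M[R]_n) q t : (q <= t)%N ->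
  prod_between G q.+1 t.+1 = G t.+1 *m prod_between G q.+1 t.
Proof.
move=> qt; rewrite /prod_between ltnS ltnNge qt /=.
move: qt; rewrite leq_eqVlt => /orP[/eqP->|qt]; first by rewrite ltnSn subnn mulmx1.
by rewrite ltnS leqNgt qt /= subSS -(subnSK qt) /= addnS subnKC.
Qed.

Section StubbornBlocks.
Variables (R : realType) (ns m : nat) (F : nat -> 'M[R]_(ns + m)).
Hypothesis F_block : forall t, ulsubmx (F t) = 1%:M /\ ursubmx (F t) = 0.

Let Dblk t := drsubmx (F t).

Definition influence_sum s t :=
  \sum_(s <= q < t.+1) prod_between Dblk q.+1 t *m dlsubmx (F q).

Lemma lprod_block s k :
  lprod F s k = block_mx 1%:M 0 (influence_sum s (s + k)) (lprod Dblk s k).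
Proof.
have F_blockE t : F t = block_mx 1%:M 0 (dlsubmx (F t)) (Dblk t).
  by case: (F_block t) => <- <-; rewrite submxK.
elim: k => [|k IHk].
  rewrite addn0 /influence_sum big_nat1 /prod_between ltnSn mul1mx /=.
  exact: F_blockE.
rewrite /= IHk {1}F_blockE mulmx_block !mul1mx !mul0mx !mulmx0 !addr0 add0r mulmx1.
congr block_mx.
rewrite /influence_sum !addnS [RHS]big_nat_recr /= ?leqW ?leq_addr //.
have -> : prod_between Dblk (s + k).+2 (s + k).+1 = 1%:M.
  by rewrite /prod_between ltnSn.
rewrite mul1mx [RHS]addrC; congr (_ + _).
rewrite mulmx_sumr; apply: eq_big_nat => q /andP[_ qk].
by rewrite prod_betweenS // mulmxA.
Qed.

Lemma prod_between_sub_block s k :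
  prod_between F s (s + k) - block_mx 1%:M 0 (influence_sum s (s + k)) 0
  = block_mx 0 0 0 (lprod Dblk s k).
Proof.
rewrite /prod_between ltnNge leq_addr /= addKn lprod_block.
by rewrite opp_block_mx add_block_mx !subrr oppr0 addr0.
Qed.

Lemma specnorm_influence_sum_le s t :
  (forall t, row_stochastic (F t)) -> (s <= t)%N ->
  specnorm (influence_sum s t) <= (m * ns)%:R.
Proof.
move=> F_rs st.
have := lprod_block s (t - s); rewrite subnKC // => /(congr1 dlsubmx).
rewrite block_mxKdl => <-.
apply: le_trans (specnorm_le_mxnorm1 _) _.
apply: (@le_trans _ _ (\sum_(i < m) \sum_(j < ns) (1 : R))).
  apply: ler_sum => i _; apply: ler_sum => j _; rewrite !mxE.
  have /andP[entry_ge0 entry_le1] := row_stochastic_entry (rshift ns i) (lshift m j)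
    (row_stochastic_lprod s (t - s) F_rs).
  by rewrite ger0_norm.
by rewrite !sumr_const !card_ord -mulrnA mulnC.
Qed.

End StubbornBlocks.

Lemma mxnorm1_block_dr (R : realType) ns m (M : 'M[R]_m) :
  mxnorm1 (block_mx (0 : 'M[R]_(ns, ns)) 0 0 M) = mxnorm1 M.
Proof.
rewrite /mxnorm1 big_split_ord /= big1 ?add0r.
  apply: eq_bigr => i _; rewrite big_split_ord /= big1 ?add0r.
    by apply: eq_bigr => j _; rewrite block_mxEdr.
  by move=> j _; rewrite block_mxEdl mxE normr0.
move=> i _; rewrite big_split_ord /= !big1 ?addr0 // => j _.
  by rewrite block_mxEur mxE normr0.
by rewrite block_mxEul mxE normr0.
Qed.

Lemma specnorm_block_dr_le (R : realType) ns m (M : 'M[R]_m) :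
  specnorm (block_mx (0 : 'M[R]_(ns, ns)) 0 0 M) <= (m * m)%:R * specnorm M.
Proof.
apply: le_trans (specnorm_le_mxnorm1 _) _.
by rewrite mxnorm1_block_dr mxnorm1_le_specnorm.
Qed.

Section Quantization.
Variables (R : realType) (K : nat).
Let N : R := K.+1%:R.
Let N_gt0 : 0 < N. Proof. by rewrite /N ltr0Sn. Qed.

(* The first cell is left-unbounded so that the cells partition ]-oo, 1]. *)
Definition cell (k : 'I_K.+1) : set R :=
  [set` if k == 0 :> nat then `]-oo, (k.+1%:R / N : R)]
        else `](k%:R / N : R), k.+1%:R / N]%R].

Lemma measurable_cell k : measurable (cell k).
Proof. exact: measurable_itv. Qed.

Lemma cellP k x :
  cell k x <-> ((k == 0 :> nat) || (k%:R / N < x)) && (x <= k.+1%:R / N).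
Proof. by rewrite /cell; case: (k == 0 :> nat); rewrite /= in_itv. Qed.

Lemma cell_uniq k k' x : cell k x -> cell k' x -> k = k'.
Proof.
have cell_lt (a b : 'I_K.+1) : (a < b)%N -> cell a x -> cell b x -> False.
  move=> ab /cellP /andP[_ xa] /cellP /andP[xb _].
  have /negbTE b0 : b != 0 :> nat by rewrite -lt0n (leq_ltn_trans _ ab).
  rewrite b0 /= in xb.
  have : a.+1%:R / N <= b%:R / N by rewrite ler_pM2r ?invr_gt0 // ler_nat.
  by move/le_lt_trans/(_ xb)/lt_le_trans/(_ xa); rewrite ltxx.
move=> xk xk'; apply/val_inj; case: (ltngtP k k') => // kk'.
  by case: (cell_lt _ _ kk' xk xk').
by case: (cell_lt _ _ kk' xk' xk).
Qed.

Lemma cell_exists x : x <= 1 -> exists k, cell k x.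
Proof.
move=> x1; suff cell_le j : (j <= K)%N -> x <= j.+1%:R / N -> exists k, cell k x.
  by apply: (cell_le K) => //; rewrite /N divff // pnatr_eq0.
elim: j => [_ x_le|j IHj jK x_le]; first by exists ord0; apply/cellP; rewrite eqxx.
have [|x_gt] := lerP x (j.+1%:R / N); first exact/IHj/ltnW.
by exists (inord j.+1); apply/cellP; rewrite inordK ?ltnS // x_gt x_le orbT.
Qed.

Definition cell_of (x : R) : 'I_K.+1 :=
  if [pick k : 'I_K.+1 | `[< cell k x >] ] is Some k then k else ord0.

Lemma cell_ofP x : x <= 1 -> cell (cell_of x) x.
Proof.
move=> x1; rewrite /cell_of; case: pickP => [k /asboolP //|none].
by have [k xk] := cell_exists x1; move: (none k); rewrite asboolT.
Qed.

Lemma cell_dist k x : cell k x -> 0 <= x -> `|x - k%:R / N| <= N^-1.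
Proof.
move=> /cellP /andP[k_low x_up] x0.
have kS : k.+1%:R / N = k%:R / N + N^-1 by rewrite -nat1r mulrDl mul1r addrC.
rewrite kS in x_up; case/orP: k_low => [/eqP k0|k_low].
  by move: x_up; rewrite k0 mul0r subr0 add0r ger0_norm.
by rewrite ger0_norm ?lerBlDl // subr_ge0 ltW.
Qed.

Definition cell_mx m (kap : {ffun 'I_m * 'I_m -> 'I_K.+1}) : 'M[R]_m :=
  \matrix_(i, j) ((kap (i, j))%:R / N).

Lemma mxnorm1_sub_cell_mx m (kap : {ffun 'I_m * 'I_m -> 'I_K.+1}) (A : 'M[R]_m) :
  (forall i j, 0 <= A i j) -> (forall i j, cell (kap (i, j)) (A i j)) ->
  mxnorm1 (A - cell_mx kap) <= (m * m)%:R / N.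
Proof.
move=> A0 A_cell; apply: (@le_trans _ _ (\sum_(i < m) \sum_(j < m) N^-1)).
  by apply: ler_sum => i _; apply: ler_sum => j _; rewrite !mxE cell_dist.
by rewrite !sumr_const !card_ord -mulrnA mulr_natl.
Qed.

End Quantization.

Lemma nneseries_lty_cvg0 (R : realType) (u : R ^nat) : (forall k, 0 <= u k) ->
  (\sum_(k <oo) (u k)%:E < +oo)%E -> u @ \oo --> 0.
Proof.
move=> u0 u_lty.
have u0E k : (0 <= (u k)%:E)%E by rewrite lee_fin.
suff : (fun k => (u k)%:E) @ \oo --> 0%E by move/fine_cvgP => [].
apply: (@squeeze_cvge _ _ _ _ (fun _ => 0%E) _
  (fun N => \sum_(N <= k <oo) (u k)%:E)%E); last first.
- exact: nneseries_tail_cvg.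
- exact: cvg_cst.
apply: nearW => N; rewrite u0E /=.
have := @nneseries_lim_ge R (fun k => (u k)%:E) xpredT N N.+1.
by rewrite big_nat1; apply.
Qed.

Lemma geometric_nneseries_lty (R : realType) (c : R) : 0 <= c < 1 ->
  (\sum_(k <oo) (c ^+ k.+1)%:E < +oo)%E.
Proof.
move=> /andP[]; rewrite le_eqVlt => /orP[/eqP <- _|c0 c1].
  by rewrite (eq_eseriesr (g := fun=> 0%E)) ?eseries0 // => k _; rewrite expr0n.
apply: le_lt_trans (ltey (c * (1 - c)^-1)%:E).
apply: lime_le.
  by apply: is_cvg_nneseries => n _ _; rewrite lee_fin exprn_ge0 // ltW.
apply: nearW => n; rewrite sumEFin lee_fin.
apply: le_trans (geometric_le_lim n (ltW c0) c0 _); last by rewrite ger0_norm ?ltW.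
by rewrite /series /=; under eq_bigr do rewrite exprS.
Qed.

Section Integration.
Context d (T : measurableType d) (R : realType).

Lemma measurable_forall (I : finType) (A : I -> set T) :
  (forall i, measurable (A i)) -> measurable [set w | forall i, A i w].
Proof.
move=> mA; have -> : [set w | forall i, A i w] = \bigcap_(i in [set: I]) A i.
  by apply/seteqP; split => w /= Aw i //; exact: Aw.
by apply: fin_bigcap_measurable => //; exact: finite_finset.
Qed.

Lemma ae_cvg0_of_summable_integral (mu : {measure set T -> \bar R})
    (f : nat -> T -> R) :
  (forall k w, 0 <= f k w) -> (forall k, measurable_fun setT (f k)) ->
  (\sum_(k <oo) \int[mu]_w (f k w)%:E < +oo)%E ->
  {ae mu, forall w, f ^~ w @ \oo --> 0}.
Proof.
move=> f0 mf int_lty.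
have f0E k w : setT w -> (0 <= (f k w)%:E)%E by rewrite lee_fin.
pose S w := (\sum_(k <oo) (f k w)%:E)%E.
have S0 w : (0 <= S w)%E by apply: nneseries_ge0 => k _ _; exact: f0E.
have S_int : mu.-integrable setT S.
  apply/integrableP; split.
    apply: ge0_emeasurable_sum => k; first by move=> w _ _; exact: f0E.
    by move=> _; exact/measurable_realfun.measurable_EFinP.
  under eq_integral do rewrite gee0_abs ?S0 //.
  rewrite /S integral_nneseries // => k.
  exact/measurable_realfun.measurable_EFinP.
apply: filterS (integrable_ae measurableT S_int) => w /(_ I).
by rewrite ge0_fin_numE // => /nneseries_lty_cvg0; apply.
Qed.

Variable P : probability T R.

Lemma probability_fin_num (A : set T) : measurable A -> P A \is a fin_num.
Proof.
move=> mA; rewrite ge0_fin_numE ?measure_ge0 //.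
exact: le_lt_trans (probability_le1 P mA) (ltey _).
Qed.

Lemma integral_simple (I : finType) (c : I -> R) (A : I -> set T) :
  (forall i, 0 <= c i) -> (forall i, measurable (A i)) ->
  (\int[P]_w (\sum_i c i * \1_(A i) w)%:E = (\sum_i c i * fine (P (A i)))%:E)%E.
Proof.
move=> c0 mA; under eq_integral do rewrite -sumEFin.
rewrite ge0_integral_sum //; first last.
- by move=> i w _; rewrite lee_fin mulr_ge0 // indicE.
- move=> i; apply/measurable_realfun.measurable_EFinP.
  apply: measurable_realfun.measurable_funM; first exact: measurable_cst.
  exact: measurable_realfun.measurable_indic.
rewrite -sumEFin; apply: eq_bigr => i _.
under eq_integral do rewrite EFinM.
have indic0 w : setT w -> (0 <= (\1_(A i) w : R)%:E)%E by rewrite lee_fin indicE.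
rewrite (ge0_integralZl_EFin P measurableT indic0 _ (c0 i)); last first.
  exact/measurable_realfun.measurable_EFinP/measurable_realfun.measurable_indic.
by rewrite integral_indic // setIT EFinM fineK // probability_fin_num.
Qed.

(* No measurability of [g] is needed: a nonnegative integral is a supremum over
   the simple functions below the integrand. *)
Lemma ge0_le_integral_nonmeasurable (f g : T -> \bar R) :
  (forall x, 0 <= f x)%E -> (forall x, f x <= g x)%E ->
  (\int[P]_x f x <= \int[P]_x g x)%E.
Proof.
move=> f0 fg; rewrite !ge0_integralE //; last first.
  by move=> x _; exact: le_trans (f0 x) (fg x).
apply: ereal_sup_le => _ [h hf <-]; exists h => //= x.
by apply: le_trans (hf x) _; rewrite !patch_setT.
Qed.

End Integration.

Definition cell_radius (R : realType) (m K : nat) : R := (m * m)%:R / K.+1%:R.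

Lemma exists_small_cell_radius (R : realType) (c : R) m :
  c < 1 -> exists K, c + 2 * cell_radius R m K < 1.
Proof.
move=> c1; have c1_gt0 : 0 < 1 - c by rewrite subr_gt0.
have bound_ge0 : 0 <= 2 * (m * m)%:R / (1 - c) by rewrite divr_ge0 // ltW.
exists (Num.Def.archi_bound (2 * (m * m)%:R / (1 - c))).
move: (archi_boundP bound_ge0); set K := Num.Def.archi_bound _ => K_gt.
have KS_gt : 2 * (m * m)%:R / (1 - c) < K.+1%:R.
  by apply: lt_le_trans K_gt _; rewrite ler_nat.
rewrite /cell_radius mulrA -ltrBrDl ltr_pdivrMr ?ltr0Sn // mulrC.
by move: KS_gt; rewrite ltr_pdivrMr // [X in _ < X]mulrC [X in X < _]mulrC.
Qed.

Section CellEvents.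
Variables (R : realType) (d : measure_display) (T : measurableType d)
  (P : probability T R) (ns m K : nat) (W : nat -> T -> 'M[R]_(ns + m)).
Hypothesis W_iid : iid_mx P W.
Hypothesis W_rs : forall t w, row_stochastic (W t w).

Local Notation cells := {ffun 'I_m * 'I_m -> 'I_K.+1}.
Let Dblk t w := drsubmx (W t w).

Lemma Dblk_entry t w i j : 0 <= Dblk t w i j <= 1.
Proof. by rewrite /Dblk !mxE; exact: row_stochastic_entry. Qed.

Definition cell_event t (kap : cells) : set T :=
  [set w | forall i j, cell (kap (i, j)) (Dblk t w i j)].

Definition cell_rect (kap : cells) : 'I_(ns + m) -> 'I_(ns + m) -> set R :=
  fun i j => match fintype.split i, fintype.split j with
             | inr i', inr j' => cell (kap (i', j'))
             | _, _ => setT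
             end.

Lemma measurable_cell_rect kap i j : measurable (cell_rect kap i j).
Proof.
rewrite /cell_rect; case: (fintype.split i) => a; case: (fintype.split j) => b //.
exact: measurable_cell.
Qed.

Lemma cell_eventE t kap : cell_event t kap = mx_event (W t) (cell_rect kap).
Proof.
have split_rshift (k : 'I_m) : fintype.split (rshift ns k) = inr k.
  exact: (unsplitK (inr _ k)).
apply/seteqP; split => w /= Ww.
- move=> i j; rewrite -(splitK i) -(splitK j) /cell_rect.
  case: (fintype.split i) => i'; case: (fintype.split j) => j'; rewrite !unsplitK //.
  by have := Ww i' j'; rewrite /Dblk !mxE.
- move=> i j; have := Ww (rshift ns i) (rshift ns j).
  by rewrite /cell_rect /Dblk !split_rshift !mxE.
Qed.

Lemma measurable_mx_event t (A : 'I_(ns + m) -> 'I_(ns + m) -> set R) :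
  (forall i j, measurable (A i j)) -> measurable (mx_event (W t) A).
Proof.
case: W_iid => mW _ _ mA.
apply: (measurable_forall (A := fun i => [set w | forall j, A i j (W t w i j)])) => i.
apply: (measurable_forall (A := fun j => [set w | A i j (W t w i j)])) => j.
by rewrite -[X in measurable X]setTI; exact: mW.
Qed.

Lemma measurable_cell_event t kap : measurable (cell_event t kap).
Proof.
by rewrite cell_eventE; apply: measurable_mx_event; exact: measurable_cell_rect.
Qed.

Definition cell_prob t kap := fine (P (cell_event t kap)).

Lemma cell_probE t kap : P (cell_event t kap) = (cell_prob t kap)%:E.
Proof.
by rewrite /cell_prob fineK // probability_fin_num //; exact: measurable_cell_event.
Qed.

Lemma cell_prob_ge0 t kap : 0 <= cell_prob t kap.
Proof. by rewrite /cell_prob fine_ge0 // measure_ge0. Qed.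

Definition cell_index t w : cells := [ffun ij => cell_of K (Dblk t w ij.1 ij.2)].

Lemma cell_indexP t w i j : cell (cell_index t w (i, j)) (Dblk t w i j).
Proof. by rewrite ffunE; apply: cell_ofP; case/andP: (Dblk_entry t w i j). Qed.

Lemma cell_eventP t kap w : cell_event t kap w <-> kap = cell_index t w.
Proof.
split => [kap_w|->]; last by move=> i j; exact: cell_indexP.
by apply/ffunP => -[i j]; apply: cell_uniq (kap_w i j) (cell_indexP _ _ _ _).
Qed.

Lemma sum_cell_indic (f : cells -> R) t w :
  \sum_kap f kap * \1_(cell_event t kap) w = f (cell_index t w).
Proof.
rewrite (bigD1 (cell_index t w)) //= big1 ?addr0.
  by rewrite indicE mem_set ?mulr1 //; apply/cell_eventP.
move=> kap /negbTE kap_neq; rewrite indicE memNset ?mulr0 // => /cell_eventP kapE.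
by rewrite kapE eqxx in kap_neq.
Qed.

Lemma expectation_cell_fun (u : cells -> R) t : (forall kap, 0 <= u kap) ->
  (\int[P]_w (u (cell_index t w))%:E = (\sum_kap u kap * cell_prob t kap)%:E)%E.
Proof.
move=> u0; under eq_integral do rewrite -(sum_cell_indic u).
exact: integral_simple u0 (measurable_cell_event t).
Qed.

Lemma sum_cell_prob t : \sum_kap cell_prob t kap = 1.
Proof.
have := @expectation_cell_fun (fun=> 1) t (fun=> ler01).
rewrite integral_cst // mul1e => PT.
have /eqP : ((\sum_kap 1 * cell_prob t kap)%:E = 1%:E)%E.
  by rewrite -PT; exact: probability_setT.
by rewrite eqe => /eqP <-; apply: eq_bigr => kap _; rewrite mul1r.
Qed.

Lemma measurable_cell_fun (u : cells -> R) t :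
  measurable_fun setT (fun w => u (cell_index t w)).
Proof.
rewrite (funext (fun w => esym (sum_cell_indic u t w))).
apply: measurable_sum => kap; apply: measurable_realfun.measurable_funM.
  exact: measurable_cst.
exact/measurable_realfun.measurable_indic/measurable_cell_event.
Qed.

Definition cell_path_event s k (phi : {ffun 'I_k.+1 -> cells}) : set T :=
  [set w | forall j : 'I_k.+1, cell_event (s + j) (phi j) w].

Lemma measurable_cell_path_event s k phi : measurable (@cell_path_event s k phi).
Proof. by apply: measurable_forall => j; exact: measurable_cell_event. Qed.

Lemma cell_path_probE s k phi :
  P (@cell_path_event s k phi) = (\prod_(j < k.+1) cell_prob (s + j) (phi j))%:E.
Proof.
case: W_iid => _ W_indep _.
pose A t := cell_rect (phi (inord (t - s))).
have := W_indep (iota s k.+1) A (iota_uniq _ _)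
  (fun t i j => measurable_cell_rect _ _ _).
have -> : [set w | forall t, t \in iota s k.+1 -> mx_event (W t) (A t) w]
          = cell_path_event s phi.
  apply/seteqP; split => w Aw.
  - move=> j; have := Aw (s + j)%N; rewrite mem_iota leq_addr ltn_add2l ltn_ord.
    by move=> /(_ isT); rewrite /A addKn inord_val -cell_eventE.
  - move=> t; rewrite mem_iota => /andP[st ts].
    have tsk : (t - s < k.+1)%N by lia.
    by have := Aw (inord (t - s)); rewrite cell_eventE /A inordK // subnKC.
have -> : iota s k.+1 = map (addn s) (iota 0 k.+1) by rewrite -iotaDl addn0.
move=> ->; rewrite big_map -prodEFin.
rewrite -[iota 0 k.+1]/(index_iota 0 k.+1) big_mkord.
by apply: eq_bigr => j _; rewrite /A addKn inord_val -cell_eventE cell_probE.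
Qed.

Definition cell_prod (u : cells -> R) s k w :=
  \prod_(j < k.+1) u (cell_index (s + j) w).

Lemma cell_prodE u s k w : cell_prod u s k w =
  \sum_(phi : {ffun 'I_k.+1 -> cells})
     (\prod_j u (phi j)) * \1_(cell_path_event s phi) w.
Proof.
pose phi_w := [ffun j : 'I_k.+1 => cell_index (s + j) w].
rewrite (bigD1 phi_w) //= [X in _ + X]big1 ?addr0.
  rewrite indicE mem_set ?mulr1; first by apply: eq_bigr => j _; rewrite ffunE.
  by move=> j; rewrite ffunE; apply/cell_eventP.
move=> phi /negbTE phi_neq; rewrite indicE memNset ?mulr0 // => phi_w_ev.
suff phiE : phi = phi_w by rewrite phiE eqxx in phi_neq.
by apply/ffunP => j; rewrite ffunE; apply/cell_eventP; exact: phi_w_ev j.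
Qed.

Lemma measurable_cell_prod u s k : measurable_fun setT (cell_prod u s k).
Proof. by apply: measurable_prod => j _; exact: measurable_cell_fun. Qed.

Lemma expectation_cell_prod u s k : (forall kap, 0 <= u kap) ->
  (\int[P]_w (cell_prod u s k w)%:E =
   (\prod_(j < k.+1) \sum_kap u kap * cell_prob (s + j) kap)%:E)%E.
Proof.
move=> u0; under eq_integral do rewrite cell_prodE.
rewrite integral_simple //; first last.
- exact: measurable_cell_path_event.
- by move=> phi; apply: prodr_ge0 => j _.
congr EFin; rewrite bigA_distr_bigA /=; apply: eq_bigr => phi _.
by rewrite cell_path_probE /= -big_split.
Qed.

Local Notation radius := (cell_radius R m K).

Definition cell_ub (kap : cells) := specnorm (cell_mx R kap) + radius.
Definition cell_lb (kap : cells) := Num.max 0 (specnorm (cell_mx R kap) - radius).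

Lemma cell_ub_ge0 kap : 0 <= cell_ub kap.
Proof. by rewrite addr_ge0 ?specnorm_ge0 ?divr_ge0. Qed.

Lemma cell_lb_ge0 kap : 0 <= cell_lb kap.
Proof. by rewrite le_max lexx. Qed.

Lemma cell_ub_le_lb kap : cell_ub kap <= cell_lb kap + 2 * radius.
Proof.
rewrite /cell_ub /cell_lb.
have : specnorm (cell_mx R kap) - radius
         <= Num.max 0 (specnorm (cell_mx R kap) - radius).
  by rewrite le_max lexx orbT.
by lra.
Qed.

Lemma mxnorm1_Dblk_sub_cell_mx t w :
  mxnorm1 (Dblk t w - cell_mx R (cell_index t w)) <= radius.
Proof.
apply: mxnorm1_sub_cell_mx => i j; last exact: cell_indexP.
by case/andP: (Dblk_entry t w i j).
Qed.

Lemma specnorm_Dblk_le_cell_ub t w : specnorm (Dblk t w) <= cell_ub (cell_index t w).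
Proof.
apply: le_trans (specnorm_le_add_mxnorm1 _ (cell_mx R (cell_index t w))) _.
by rewrite lerD2l mxnorm1_Dblk_sub_cell_mx.
Qed.

Lemma cell_lb_le_specnorm_Dblk t w : cell_lb (cell_index t w) <= specnorm (Dblk t w).
Proof.
rewrite ge_max specnorm_ge0 lerBlDr /=.
apply: le_trans (specnorm_le_add_mxnorm1 _ (Dblk t w)) _.
by rewrite lerD2l mxnorm1_distC mxnorm1_Dblk_sub_cell_mx.
Qed.

Lemma expectation_cell_ub_le t c :
  ('E_P[fun w => specnorm (Dblk t w)] = c%:E)%E ->
  \sum_kap cell_ub kap * cell_prob t kap <= c + 2 * radius.
Proof.
move=> ED; have lb_le : \sum_kap cell_lb kap * cell_prob t kap <= c.
  rewrite -lee_fin -(expectation_cell_fun t cell_lb_ge0) -ED unlock.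
  apply: ge0_le_integral_nonmeasurable => w; rewrite lee_fin ?cell_lb_ge0 //.
  exact: cell_lb_le_specnorm_Dblk.
apply: le_trans (_ : \sum_kap (cell_lb kap + 2 * radius) * cell_prob t kap <= _).
  by apply: ler_sum => kap _; rewrite ler_wpM2r ?cell_prob_ge0 ?cell_ub_le_lb.
under eq_bigr do rewrite mulrDl.
by rewrite big_split /= -mulr_sumr sum_cell_prob mulr1 lerD2r.
Qed.

Lemma specnorm_lprod_le_cell_prod s k w :
  specnorm (lprod (Dblk ^~ w) s k) <= cell_prod cell_ub s k w.
Proof.
apply: le_trans (specnorm_lprod_le _ _ _) _.
by apply: ler_prod => j _; rewrite specnorm_ge0 specnorm_Dblk_le_cell_ub.
Qed.

Lemma ae_cell_prod_cvg0 rho s : 0 <= rho < 1 ->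
  (forall t, \sum_kap cell_ub kap * cell_prob t kap <= rho) ->
  {ae P, forall w, (fun k => cell_prod cell_ub s k w) @ \oo --> 0}.
Proof.
move=> rho01 mean_le.
have prod_ge0 k w : 0 <= cell_prod cell_ub s k w.
  by apply: prodr_ge0 => j _; exact: cell_ub_ge0.
apply: (ae_cvg0_of_summable_integral prod_ge0 (measurable_cell_prod _ _)).
apply: le_lt_trans (geometric_nneseries_lty rho01).
apply: lee_nneseries => [k _ _|k _].
  by apply: integral_ge0 => w _; rewrite lee_fin.
rewrite expectation_cell_prod ?lee_fin; last exact: cell_ub_ge0.
apply: (@le_trans _ _ (\prod_(j < k.+1) rho)); last by rewrite prodr_const card_ord.
apply: ler_prod => j _; rewrite mean_le andbT.
by apply: sumr_ge0 => kap _; rewrite mulr_ge0 ?cell_ub_ge0 ?cell_prob_ge0.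
Qed.

End CellEvents.

Unset Implicit Arguments.

Theorem lemma2 (R : realType) (d : measure_display) (T : measurableType d)
  (P : probability T R) (ns m : nat)
  (W : nat -> T -> 'M[R]_(ns + m)) (Wbar : 'M[R]_(ns + m)) :
  (0 < ns)%N -> (0 < m)%N ->
  iid_mx P W ->
  (forall t w, row_stochastic (W t w)) ->
  (forall t w, ulsubmx (W t w) = 1%:M /\ ursubmx (W t w) = 0) ->
  (forall t i j, ('E_P[fun w => W t w i j] = (Wbar i j)%:E)%E) ->
  specnorm (drsubmx Wbar) < 1 ->
  (forall t, ('E_P[fun w => specnorm (drsubmx (W t w))]
              = (specnorm (drsubmx Wbar))%:E)%E) ->
  let B := fun t w => dlsubmx (W t w) in
  let D := fun t w => drsubmx (W t w) in
  let Phi := fun w s t => prod_between (fun k => W k w) s t in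
  let Bst := fun w s t =>
    \sum_(s <= q < t.+1) prod_between (fun k => D k w) q.+1 t *m B q w in
  {ae P, forall w,
    forall s : nat,
      [/\ (fun k : nat => specnorm (lprod (fun k => D k w) s k)) @ \oo --> 0,
          (fun k : nat => specnorm (Phi w s (s + k)%N
                          - block_mx 1%:M 0 (Bst w s (s + k)%N) 0)) @ \oo --> 0
        & exists M : R, forall t : nat, (s <= t)%N -> specnorm (Bst w s t) <= M]}.
Proof.
move=> _ _ W_iid W_rs W_block _ Dbar_lt1 ED B D Phi Bst.
have [K rho_lt1] := exists_small_cell_radius m Dbar_lt1.
have rho01 : 0 <= specnorm (drsubmx Wbar) + 2 * cell_radius R m K < 1.
  by rewrite rho_lt1 andbT addr_ge0 ?mulr_ge0 ?specnorm_ge0 ?divr_ge0.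
have := ae_foralln (fun s => ae_cell_prod_cvg0 W_iid W_rs s rho01
  (fun t => expectation_cell_ub_le K W_iid W_rs (ED t))).
apply: filterS => w prod_cvg0 s.
have Dprod_cvg0 : (fun k => specnorm (lprod (D ^~ w) s k)) @ \oo --> 0.
  apply: (squeeze_cvgr _ (cvg_cst 0) (prod_cvg0 s)); apply: nearW => k.
  by rewrite specnorm_ge0 specnorm_lprod_le_cell_prod.
have W_blockw t : ulsubmx (W t w) = 1%:M /\ ursubmx (W t w) = 0 by exact: W_block.
split => //.
- have := cvgMl_tmp (a := (m * m)%:R) Dprod_cvg0.
  rewrite mulr0 => /(_ eventually_filter) bound_cvg0.
  apply: (squeeze_cvgr _ (cvg_cst 0) bound_cvg0).
  apply: nearW => k; rewrite /Phi /Bst prod_between_sub_block //.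
  by rewrite specnorm_ge0 specnorm_block_dr_le.
- by exists (m * ns)%:R => t; apply: specnorm_influence_sum_le.
Qed.
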